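(* Let $n\in\mathbb{N}$ and $M\models\mathrm{I}\Delta_0+\exp$. If there is a proper end extension $K$ of $M$ with $M\preccurlyeq_{\Sigma_{n+2}}K$ and $K\models M\text{-}\mathrm{I}\Sigma_{n+1}$, then $M\models\mathrm{WR}(\Sigma_{n+1}\wedge\Pi_{n+1})$.
   Context: $M\preccurlyeq_{\Sigma_k}K$: every $\Sigma_k$ formula with parameters from $M$ has the same truth value in $M$ and $K$; end extension: every element of $K\setminus M$ exceeds every element of $M$; proper: $K\neq M$. For an end extension $M\subseteq K$ of models of $\mathrm{I}\Delta_0+\exp$, $K\models M\text{-}\mathrm{I}\Sigma_{n+1}$ means: for every $\Sigma_{n+1}$ formula $\phi(x)$ with parameters from $K$ and every $a\in M$, $K\models\phi(0)\wedge\forall x<a(\phi(x)\to\phi(x+1))\to\forall x<a\,\phi(x)$. $\Sigma_{k}\wedge\Pi_{k}$ is the class of conjunctions of a $\Sigma_k$ and a $\Pi_k$ formula. For a formula $\phi(x,y)$ (possibly with further free variables), $\mathrm{WR}\phi$ is the universal closure of $\forall x\,\exists y<a\,\phi(x,y)\to\exists y<a\,\forall b\,\exists x>b\,\phi(x,y)$, and $\mathrm{WR}\Gamma=\mathrm{I}\Delta_0\cup\{\mathrm{WR}\phi:\phi\in\Gamma\}$. *)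

(* a deep embedding of first-order arithmetic in the
   language {0, 1, +, *, <} (equality interpreted as Leibniz equality). *)

Record structure := {
  dom :> Type;
  szero : dom;
  sone : dom;
  splus : dom -> dom -> dom;
  stimes : dom -> dom -> dom;
  slt : dom -> dom -> Prop
}.

Arguments szero {_}. Arguments sone {_}.
Arguments splus {_} _ _. Arguments stimes {_} _ _. Arguments slt {_} _ _.

(** * Syntax (de Bruijn indices) *)
Inductive term : Type :=
| tvar (i : nat)
| tzero
| tone
| tplus (t u : term)
| ttimes (t u : term).

Inductive form : Type :=
| fEq (t u : term)
| fLt (t u : term)
| fNot (p : form)
| fAnd (p q : form)
| fOr (p q : form)
| fImp (p q : form)
| fEx (p : form)              (* exists x, p   (x = variable 0 of p) *)
| fAll (p : form)
| fBEx (t : term) (p : form)  (* exists x < t, p ; t is read in the outer scope *)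
| fBAll (t : term) (p : form).

Definition scons {D : Type} (d : D) (e : nat -> D) : nat -> D :=
  fun i => match i with 0 => d | S j => e j end.

Fixpoint teval (M : structure) (e : nat -> M) (t : term) : M :=
  match t with
  | tvar i => e i
  | tzero => szero
  | tone => sone
  | tplus t u => splus (teval M e t) (teval M e u)
  | ttimes t u => stimes (teval M e t) (teval M e u)
  end.

Fixpoint sat (M : structure) (e : nat -> M) (p : form) : Prop :=
  match p with
  | fEq t u => teval M e t = teval M e u
  | fLt t u => slt (teval M e t) (teval M e u)
  | fNot p => ~ sat M e p
  | fAnd p q => sat M e p /\ sat M e q
  | fOr p q => sat M e p \/ sat M e q
  | fImp p q => sat M e p -> sat M e q
  | fEx p => exists d : M, sat M (scons d e) p
  | fAll p => forall d : M, sat M (scons d e) p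
  | fBEx t p => exists d : M, slt d (teval M e t) /\ sat M (scons d e) p
  | fBAll t p => forall d : M, slt d (teval M e t) -> sat M (scons d e) p
  end.

Inductive Delta0 : form -> Prop :=
| D0Eq t u : Delta0 (fEq t u)
| D0Lt t u : Delta0 (fLt t u)
| D0Not p : Delta0 p -> Delta0 (fNot p)
| D0And p q : Delta0 p -> Delta0 q -> Delta0 (fAnd p q)
| D0Or p q : Delta0 p -> Delta0 q -> Delta0 (fOr p q)
| D0Imp p q : Delta0 p -> Delta0 q -> Delta0 (fImp p q)
| D0BEx t p : Delta0 p -> Delta0 (fBEx t p)
| D0BAll t p : Delta0 p -> Delta0 (fBAll t p).

Inductive Sigma : nat -> form -> Prop :=
| Sigma0 p : Delta0 p -> Sigma 0 p
| SigmaPi k p : Pi k p -> Sigma (S k) p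
| SigmaEx k p : Sigma (S k) p -> Sigma (S k) (fEx p)
with Pi : nat -> form -> Prop :=
| Pi0 p : Delta0 p -> Pi 0 p
| PiSigma k p : Sigma k p -> Pi (S k) p
| PiAll k p : Pi (S k) p -> Pi (S k) (fAll p).

Definition succ {M : structure} (x : M) : M := splus x sone.

Definition basic_axioms (M : structure) : Prop :=
  (forall x : M, succ x <> szero) /\
  (forall x y : M, succ x = succ y -> x = y) /\
  (forall x : M, x <> szero -> exists y, x = succ y) /\
  (forall x : M, splus x szero = x) /\
  (forall x y : M, splus x (succ y) = succ (splus x y)) /\
  (forall x : M, stimes x szero = szero) /\
  (forall x y : M, stimes x (succ y) = splus (stimes x y) x) /\
  (forall x y : M, slt x y <-> exists z, splus (succ z) x = y).

(* Induction axioms for Delta_0 formulas (variable 0 is the induction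
   variable, all other variables are parameters). *)
Definition Delta0_induction (M : structure) : Prop :=
  forall p : form, Delta0 p -> forall e : nat -> M,
    sat M (scons szero e) p ->
    (forall x : M, sat M (scons x e) p -> sat M (scons (succ x) e) p) ->
    forall x : M, sat M (scons x e) p.

Definition model_IDelta0 (M : structure) : Prop :=
  basic_axioms M /\ Delta0_induction M.

(* Environment [x; y; z] (x = var 2, y = var 1, z = var 0), others := 0 *)
Definition env3 {M : structure} (x y z : M) : nat -> M :=
  scons z (scons y (scons x (fun _ => szero))).

(* exp: totality of exponentiation, whose graph is Delta_0-definable. *)
Definition exp_axiom (M : structure) : Prop :=
  exists E : form, Delta0 E /\
    (forall x y z w : M, sat M (env3 x y z) E -> sat M (env3 x y w) E -> z = w) /\
    (forall x z : M, sat M (env3 x szero z) E <-> z = sone) /\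
    (forall x y w : M, sat M (env3 x (succ y) w) E <->
                       exists z, sat M (env3 x y z) E /\ w = stimes z x) /\
    (forall x y : M, exists z, sat M (env3 x y z) E).

Definition model_IDelta0_exp (M : structure) : Prop :=
  model_IDelta0 M /\ exp_axiom M.

Record embedding (M K : structure) : Type := {
  emb :> M -> K;
  emb_inj : forall x y, emb x = emb y -> x = y;
  emb_zero : emb szero = szero;
  emb_one : emb sone = sone;
  emb_plus : forall x y, emb (splus x y) = splus (emb x) (emb y);
  emb_times : forall x y, emb (stimes x y) = stimes (emb x) (emb y);
  emb_lt : forall x y, slt x y <-> slt (emb x) (emb y)
}.

Arguments emb {M K} _ _.

Definition in_image {M K : structure} (f : embedding M K) (k : K) : Prop :=
  exists m : M, emb f m = k.

Definition end_extension {M K : structure} (f : embedding M K) : Prop :=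
  forall k : K, ~ in_image f k -> forall m : M, slt (emb f m) k.

Definition proper_extension {M K : structure} (f : embedding M K) : Prop :=
  exists k : K, ~ in_image f k.

Definition Sigma_elementary (k : nat) {M K : structure} (f : embedding M K) : Prop :=
  forall p : form, Sigma k p -> forall e : nat -> M,
    sat M e p <-> sat K (fun i => emb f (e i)) p.

Definition M_ISigma (k : nat) {M K : structure} (f : embedding M K) : Prop :=
  forall p : form, Sigma k p -> forall (e : nat -> K) (a : M),
    sat K (scons szero e) p ->
    (forall x : K, slt x (emb f a) -> sat K (scons x e) p -> sat K (scons (succ x) e) p) ->
    forall x : K, slt x (emb f a) -> sat K (scons x e) p.

(* WR phi, with phi(x,y): y = variable 0, x = variable 1, further variables
   are parameters; a is a fresh variable. *)
Definition WR_holds (M : structure) (p : form) : Prop :=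
  forall (e : nat -> M) (a : M),
    (forall x : M, exists y : M, slt y a /\ sat M (scons y (scons x e)) p) ->
    exists y : M, slt y a /\
      forall b : M, exists x : M, slt b x /\ sat M (scons y (scons x e)) p.

Definition WR_SigmaPi (k : nat) (M : structure) : Prop :=
  model_IDelta0 M /\
  forall p q : form, Sigma k p -> Pi k q -> WR_holds M (fAnd p q).

(* Suppose WR fails for [p /\ q], with [p] in Sigma_{n+1} and [q] in Pi_{n+1}:
   every [x] has some [y < a] with [(p /\ q)(x, y)], but each [y < a] has a
   bound beyond which [(p /\ q)(-, y)] fails.  Since "some [x > b] satisfies
   [(p /\ q)(x, y)]" is Sigma_{n+2}, elementarity makes [(p /\ q)(k, y)] false
   in [K] for every nonstandard [k] and every [y < a] in [M].

   Write [q(x, y)] as [forall l, ~ q'(x, y, l)] with [q'] in Pi_n.  In [K], code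
   subsets [s] of [a] by numbers below [2^a], and call [s] witnessed when one
   number [t] lists, for each [y] in [s], a tuple [l] with [q'(k, y, l)].  "Some
   witnessed [s] is [>= c]" is Sigma_{n+1} in [c], true for [c = 0] and false
   for [c = 2^a], so M-I Sigma_{n+1} gives a [c] where it holds but fails at
   [c + 1].  A witnessed [s >= c] is then maximal: [q(k, y)], hence [~ p(k, y)],
   holds for all [y < a] outside [s].  Thus [K] satisfies the Sigma_{n+2}
   statement "some [x], [s], [t] have [~ p(x, y)] for [y < a] outside [s] and
   [t] lists refutations of [q(x, y)] for [y] in [s]"; an [x] for it in [M]
   has no [y < a] with [(p /\ q)(x, y)]. *)

From Stdlib Require Import Arith Lia List Classical FunctionalExtensionality ClassicalEpsilon Ring.
Import ListNotations.

Fixpoint tsubst (s : nat -> term) (t : term) : term :=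
  match t with
  | tvar i => s i
  | tzero => tzero
  | tone => tone
  | tplus t u => tplus (tsubst s t) (tsubst s u)
  | ttimes t u => ttimes (tsubst s t) (tsubst s u)
  end.

Definition tren (xi : nat -> nat) : term -> term := tsubst (fun i => tvar (xi i)).

Definition up (s : nat -> term) : nat -> term := scons (tvar 0) (fun i => tren S (s i)).

Fixpoint subst (s : nat -> term) (p : form) : form :=
  match p with
  | fEq t u => fEq (tsubst s t) (tsubst s u)
  | fLt t u => fLt (tsubst s t) (tsubst s u)
  | fNot p => fNot (subst s p)
  | fAnd p q => fAnd (subst s p) (subst s q)
  | fOr p q => fOr (subst s p) (subst s q)
  | fImp p q => fImp (subst s p) (subst s q)
  | fEx p => fEx (subst (up s) p)
  | fAll p => fAll (subst (up s) p)
  | fBEx t p => fBEx (tsubst s t) (subst (up s) p)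
  | fBAll t p => fBAll (tsubst s t) (subst (up s) p)
  end.

Definition ren (xi : nat -> nat) : form -> form := subst (fun i => tvar (xi i)).

Lemma teval_subst (D : structure) (e : nat -> D) s t :
  teval D e (tsubst s t) = teval D (fun i => teval D e (s i)) t.
Proof. induction t; simpl; congruence. Qed.

Lemma teval_shift (D : structure) (e : nat -> D) d t :
  teval D (scons d e) (tren S t) = teval D e t.
Proof. unfold tren. rewrite teval_subst. reflexivity. Qed.

Lemma teval_up (D : structure) (e : nat -> D) s d :
  (fun i => teval D (scons d e) (up s i)) = scons d (fun i => teval D e (s i)).
Proof.
  apply functional_extensionality; intros [|i]; simpl; [reflexivity|].
  apply teval_shift.
Qed.

Lemma sat_ext (D : structure) (e e' : nat -> D) p :
  (forall i, e i = e' i) -> sat D e p <-> sat D e' p.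
Proof. intros H. now rewrite (functional_extensionality e e' H). Qed.

Lemma sat_subst (D : structure) p : forall (e : nat -> D) s,
  sat D e (subst s p) <-> sat D (fun i => teval D e (s i)) p.
Proof.
  induction p; intros e s; simpl; rewrite ?teval_subst;
    repeat match goal with IH : forall _ _, _ <-> _ |- _ => setoid_rewrite IH end;
    try setoid_rewrite teval_up; tauto.
Qed.

Lemma sat_ren (D : structure) p (e : nat -> D) xi :
  sat D e (ren xi p) <-> sat D (fun i => e (xi i)) p.
Proof. apply sat_subst. Qed.

Lemma sat_shift (D : structure) p (e : nat -> D) d : sat D (scons d e) (ren S p) <-> sat D e p.
Proof. rewrite sat_ren. reflexivity. Qed.

Definition app_env {D : Type} (l : list D) (e : nat -> D) : nat -> D := fold_right scons e l.

Lemma app_env_lt {D : Type} (l : list D) e e' i :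
  i < length l -> app_env l e i = app_env l e' i.
Proof.
  revert i; induction l as [|d l IH]; simpl; intros [|i] H; try lia; simpl; auto.
  apply IH; lia.
Qed.

Lemma app_env_ge {D : Type} (l : list D) e i :
  length l <= i -> app_env l e i = e (i - length l).
Proof.
  revert i; induction l as [|d l IH]; simpl; intros i H.
  - f_equal; lia.
  - destruct i as [|i]; [lia|]. apply IH; lia.
Qed.

Lemma app_env_plus {D : Type} (l : list D) e i : app_env l e (i + length l) = e i.
Proof. rewrite app_env_ge by lia. f_equal. lia. Qed.

Lemma app_env_snoc {D : Type} (l : list D) d e : app_env l (scons d e) = app_env (l ++ [d]) e.
Proof. unfold app_env. rewrite fold_right_app. reflexivity. Qed.

Lemma list_snoc_cases {A : Type} (l : list A) m :
  length l = S m -> exists l' x, l = l' ++ [x] /\ length l' = m.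
Proof.
  intros H. destruct (exists_last (l := l)) as [l' [x ->]].
  - intros ->; discriminate.
  - exists l', x. rewrite length_app in H. simpl in H. split; [reflexivity | lia].
Qed.

(** * The arithmetic hierarchy *)

Lemma Delta0_subst s p : Delta0 p -> Delta0 (subst s p).
Proof. intros H; revert s; induction H; intros s; simpl; constructor; auto. Qed.

Scheme Sigma_mut := Induction for Sigma Sort Prop
with Pi_mut := Induction for Pi Sort Prop.
Combined Scheme Sigma_Pi_mut from Sigma_mut, Pi_mut.

Lemma Sigma_Pi_subst :
  (forall k p, Sigma k p -> forall s, Sigma k (subst s p)) /\
  (forall k p, Pi k p -> forall s, Pi k (subst s p)).
Proof.
  apply Sigma_Pi_mut; intros; simpl.
  - now apply Sigma0, Delta0_subst.
  - now apply SigmaPi.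
  - now apply SigmaEx.
  - now apply Pi0, Delta0_subst.
  - now apply PiSigma.
  - now apply PiAll.
Qed.

Lemma Sigma_subst k s p : Sigma k p -> Sigma k (subst s p).
Proof. intros H; now apply Sigma_Pi_subst. Qed.

Lemma Pi_subst k s p : Pi k p -> Pi k (subst s p).
Proof. intros H; now apply Sigma_Pi_subst. Qed.

Lemma Sigma_Pi_succ :
  (forall k p, Sigma k p -> Sigma (S k) p) /\ (forall k p, Pi k p -> Pi (S k) p).
Proof.
  apply Sigma_Pi_mut; intros.
  - now apply SigmaPi, Pi0.
  - now apply SigmaPi.
  - now apply SigmaEx.
  - now apply PiSigma, Sigma0.
  - now apply PiSigma.
  - now apply PiAll.
Qed.

Lemma Sigma_succ k p : Sigma k p -> Sigma (S k) p.
Proof. apply Sigma_Pi_succ. Qed.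

Lemma Pi_succ k p : Pi k p -> Pi (S k) p.
Proof. apply Sigma_Pi_succ. Qed.

Lemma Delta0_Sigma_Pi k p : Delta0 p -> Sigma k p /\ Pi k p.
Proof.
  intros H; induction k as [|k [HS HP]].
  - split; constructor; exact H.
  - split; [apply Sigma_succ | apply Pi_succ]; assumption.
Qed.

Lemma Delta0_Sigma k p : Delta0 p -> Sigma k p.
Proof. intros H; now apply Delta0_Sigma_Pi. Qed.

Lemma Delta0_Pi k p : Delta0 p -> Pi k p.
Proof. intros H; now apply Delta0_Sigma_Pi. Qed.

Lemma Sigma0_Delta0 p : Sigma 0 p -> Delta0 p.
Proof. now inversion 1. Qed.

Lemma Pi0_Delta0 p : Pi 0 p -> Delta0 p.
Proof. now inversion 1. Qed.

Lemma Sigma_S_ind k (P : form -> Prop) :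
  (forall p, Pi k p -> P p) -> (forall p, P p -> P (fEx p)) ->
  forall p, Sigma (S k) p -> P p.
Proof.
  intros Hbase Hex p H. remember (S k) as k' eqn:E.
  induction H; [discriminate | injection E as <-; auto | auto].
Qed.

Lemma Pi_S_ind k (P : form -> Prop) :
  (forall p, Sigma k p -> P p) -> (forall p, P p -> P (fAll p)) ->
  forall p, Pi (S k) p -> P p.
Proof.
  intros Hbase Hall p H. remember (S k) as k' eqn:E.
  induction H; [discriminate | injection E as <-; auto | auto].
Qed.

Fixpoint alls (j : nat) (p : form) : form :=
  match j with 0 => p | S j => fAll (alls j p) end.

Lemma sat_alls (D : structure) j p : forall e,
  sat D e (alls j p) <-> forall l : list D, length l = j -> sat D (app_env l e) p.
Proof.
  induction j as [|j IH]; intros e; simpl.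
  - split.
    + intros H [|d l] Hl; [exact H | discriminate].
    + intros H. now apply (H []).
  - split.
    + intros H l Hl. destruct (list_snoc_cases l j Hl) as [l' [d [-> Hl']]].
      rewrite <- app_env_snoc. now apply IH.
    + intros H d. apply IH. intros l Hl. rewrite app_env_snoc. apply H.
      rewrite length_app; simpl; lia.
Qed.

Lemma Pi_prenex k q : Pi (S k) q ->
  exists m q0, Sigma k q0 /\
    forall D e, sat D e q <-> forall l : list D, length l = m -> sat D (app_env l e) q0.
Proof.
  intros H. induction H as [q Hq | q [m [q0 [Hq0 Hsat]]]] using Pi_S_ind.
  - exists 0, q. split; [exact Hq|]. intros D e. apply (sat_alls D 0).
  - exists (S m), q0. split; [exact Hq0|]. intros D e.
    rewrite <- sat_alls. simpl. setoid_rewrite Hsat. now setoid_rewrite sat_alls.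
Qed.

Definition equivalent (p q : form) : Prop := forall D e, sat D e p <-> sat D e q.

Lemma Sigma_Pi_neg :
  (forall k p, Sigma k p -> exists p', Pi k p' /\ equivalent p' (fNot p)) /\
  (forall k p, Pi k p -> exists p', Sigma k p' /\ equivalent p' (fNot p)).
Proof.
  apply Sigma_Pi_mut.
  - intros p Hp. exists (fNot p). split; [now do 2 constructor | easy].
  - intros k p _ [p' [Hp' Hsat]]. exists p'. split; [now apply PiSigma | exact Hsat].
  - intros k p _ [p' [Hp' Hsat]]. exists (fAll p'). split; [now apply PiAll|].
    intros D e. simpl. setoid_rewrite (Hsat D). simpl. firstorder.
  - intros p Hp. exists (fNot p). split; [now do 2 constructor | easy].
  - intros k p _ [p' [Hp' Hsat]]. exists p'. split; [now apply SigmaPi | exact Hsat].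
  - intros k p _ [p' [Hp' Hsat]]. exists (fEx p'). split; [now apply SigmaEx|].
    intros D e. simpl. setoid_rewrite (Hsat D). simpl. split.
    + intros [d Hd] H. exact (Hd (H d)).
    + intros H. apply not_all_ex_not in H as [d Hd]. now exists d.
Qed.

Lemma Pi_prenex_neg k q : Pi (S k) q ->
  exists m q', Pi k q' /\
    forall D e, sat D e q <-> forall l : list D, length l = m -> ~ sat D (app_env l e) q'.
Proof.
  intros Hq. destruct (Pi_prenex k q Hq) as (m & q0 & Hq0 & Hsat).
  destruct (proj1 Sigma_Pi_neg k q0 Hq0) as (q' & Hq' & Hneg).
  exists m, q'. split; [exact Hq'|]. intros D e. rewrite Hsat.
  setoid_rewrite (Hneg D). simpl. split; intros H l Hl; [auto|]. apply NNPP; auto.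
Qed.
Definition prenex_connective (c : form -> form -> form) : Prop :=
  (forall p q, equivalent (c (fEx p) q) (fEx (c p (ren S q)))) /\
  (forall p q, equivalent (c p (fEx q)) (fEx (c (ren S p) q))) /\
  (forall p q, equivalent (c (fAll p) q) (fAll (c p (ren S q)))) /\
  (forall p q, equivalent (c p (fAll q)) (fAll (c (ren S p) q))).

Definition closed_under (c : form -> form -> form) (C : form -> Prop) : Prop :=
  forall p q, C p -> C q -> exists r, C r /\ equivalent r (c p q).

Lemma equivalent_ex p q : equivalent p q -> equivalent (fEx p) (fEx q).
Proof. intros H D e. simpl. now setoid_rewrite (H D). Qed.

Lemma equivalent_all p q : equivalent p q -> equivalent (fAll p) (fAll q).
Proof. intros H D e. simpl. now setoid_rewrite (H D). Qed.

Lemma prenex_fAnd : prenex_connective fAnd.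
Proof.
  refine (conj _ (conj _ (conj _ _))); intros * ?; simpl; setoid_rewrite sat_shift; firstorder.
  all: exact szero.
Qed.

Lemma prenex_fOr : prenex_connective fOr.
Proof.
  refine (conj _ (conj _ (conj _ _))); intros * ?; simpl; setoid_rewrite sat_shift; try firstorder.
  all: try exact szero.
  all: match goal with
       | |- _ \/ sat ?D ?e ?r => destruct (classic (sat D e r)); firstorder
       | |- sat ?D ?e ?r \/ _ => destruct (classic (sat D e r)); firstorder
       end.
Qed.

Lemma Sigma_S_closed k c : prenex_connective c ->
  closed_under c (Pi k) -> closed_under c (Sigma (S k)).
Proof.
  intros (Hexl & Hexr & _) HPi p q Hp. revert q.
  induction Hp as [p Hp | p IHp] using Sigma_S_ind; intros q Hq.
  - revert p Hp. induction Hq as [q Hq | q IHq] using Sigma_S_ind; intros p Hp.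
    + destruct (HPi p q Hp Hq) as [r [Hr Hsat]].
      exists r. split; [now apply SigmaPi | exact Hsat].
    + destruct (IHq (ren S p) (Pi_subst _ _ _ Hp)) as [r [Hr Hsat]].
      exists (fEx r). split; [now apply SigmaEx|].
      intros D e. rewrite (Hexr p q D e). now apply equivalent_ex.
  - destruct (IHp (ren S q) (Sigma_subst _ _ _ Hq)) as [r [Hr Hsat]].
    exists (fEx r). split; [now apply SigmaEx|].
    intros D e. rewrite (Hexl p q D e). now apply equivalent_ex.
Qed.

Lemma Pi_S_closed k c : prenex_connective c ->
  closed_under c (Sigma k) -> closed_under c (Pi (S k)).
Proof.
  intros (_ & _ & Halll & Hallr) HSigma p q Hp. revert q.
  induction Hp as [p Hp | p IHp] using Pi_S_ind; intros q Hq.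
  - revert p Hp. induction Hq as [q Hq | q IHq] using Pi_S_ind; intros p Hp.
    + destruct (HSigma p q Hp Hq) as [r [Hr Hsat]].
      exists r. split; [now apply PiSigma | exact Hsat].
    + destruct (IHq (ren S p) (Sigma_subst _ _ _ Hp)) as [r [Hr Hsat]].
      exists (fAll r). split; [now apply PiAll|].
      intros D e. rewrite (Hallr p q D e). now apply equivalent_all.
  - destruct (IHp (ren S q) (Pi_subst _ _ _ Hq)) as [r [Hr Hsat]].
    exists (fAll r). split; [now apply PiAll|].
    intros D e. rewrite (Halll p q D e). now apply equivalent_all.
Qed.

Lemma Sigma_Pi_closed k c : prenex_connective c -> closed_under c Delta0 ->
  closed_under c (Sigma k) /\ closed_under c (Pi k).
Proof.
  intros Hc H0. induction k as [|k [HS HP]].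
  - split; intros p q Hp Hq.
    + destruct (H0 p q) as [r [Hr Hsat]]; auto using Sigma0_Delta0.
      exists r. split; [now constructor | exact Hsat].
    + destruct (H0 p q) as [r [Hr Hsat]]; auto using Pi0_Delta0.
      exists r. split; [now constructor | exact Hsat].
  - split; [now apply Sigma_S_closed | now apply Pi_S_closed].
Qed.

Lemma Delta0_closed c : (forall p q, Delta0 p -> Delta0 q -> Delta0 (c p q)) ->
  closed_under c Delta0.
Proof. intros Hc p q Hp Hq. exists (c p q). split; [auto | easy]. Qed.

Lemma Sigma_closed_and k : closed_under fAnd (Sigma k).
Proof. apply Sigma_Pi_closed; [exact prenex_fAnd | apply Delta0_closed, D0And]. Qed.

Lemma Pi_closed_or k : closed_under fOr (Pi k).
Proof. apply Sigma_Pi_closed; [exact prenex_fOr | apply Delta0_closed, D0Or]. Qed.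

Definition pred : Type := forall D : structure, (nat -> D) -> Prop.

Definition Definable (C : form -> Prop) (P : pred) : Prop :=
  exists r, C r /\ forall D e, sat D e r <-> P D e.

Lemma definable_ext C (P Q : pred) :
  Definable C P -> (forall D e, P D e <-> Q D e) -> Definable C Q.
Proof. intros [r [Hr HP]] H. exists r. split; [exact Hr|]. intros D e. now rewrite HP. Qed.

Lemma definable_weaken (C C' : form -> Prop) P :
  (forall r, C r -> C' r) -> Definable C P -> Definable C' P.
Proof. intros HC [r [Hr HP]]. exists r. split; auto. Qed.

Lemma Delta0_def_Sigma k P : Definable Delta0 P -> Definable (Sigma k) P.
Proof. apply definable_weaken, Delta0_Sigma. Qed.

Lemma Pi_def_Sigma_succ k P : Definable (Pi k) P -> Definable (Sigma (S k)) P.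
Proof. apply definable_weaken, SigmaPi. Qed.

Lemma Sigma_def_succ k P : Definable (Sigma k) P -> Definable (Sigma (S k)) P.
Proof. apply definable_weaken, Sigma_succ. Qed.

Lemma definable_sat (C : form -> Prop) p : C p -> Definable C (fun D e => sat D e p).
Proof. intros Hp. now exists p. Qed.

Lemma definable_subst (C : form -> Prop) s p :
  (forall s r, C r -> C (subst s r)) -> C p ->
  Definable C (fun D e => sat D (fun i => teval D e (s i)) p).
Proof. intros HC Hp. exists (subst s p). split; [auto | intros; apply sat_subst]. Qed.

Lemma definable_and C P Q : closed_under fAnd C ->
  Definable C P -> Definable C Q -> Definable C (fun D e => P D e /\ Q D e).
Proof.
  intros HC [p [Hp HP]] [q [Hq HQ]]. destruct (HC p q Hp Hq) as [r [Hr Hsat]].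
  exists r. split; [exact Hr|]. intros D e. rewrite (Hsat D e). simpl. now rewrite HP, HQ.
Qed.

Lemma definable_or C P Q : closed_under fOr C ->
  Definable C P -> Definable C Q -> Definable C (fun D e => P D e \/ Q D e).
Proof.
  intros HC [p [Hp HP]] [q [Hq HQ]]. destruct (HC p q Hp Hq) as [r [Hr Hsat]].
  exists r. split; [exact Hr|]. intros D e. rewrite (Hsat D e). simpl. now rewrite HP, HQ.
Qed.

Lemma Delta0_def_eq t u : Definable Delta0 (fun D e => teval D e t = teval D e u).
Proof. exists (fEq t u). split; [constructor | reflexivity]. Qed.

Lemma Delta0_def_lt t u : Definable Delta0 (fun D e => slt (teval D e t) (teval D e u)).
Proof. exists (fLt t u). split; [constructor | reflexivity]. Qed.

Lemma Delta0_def_not P : Definable Delta0 P -> Definable Delta0 (fun D e => ~ P D e).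
Proof.
  intros [r [Hr HP]]. exists (fNot r). split; [now constructor|].
  intros D e. simpl. now rewrite HP.
Qed.

Lemma Delta0_def_imp P Q : Definable Delta0 P -> Definable Delta0 Q ->
  Definable Delta0 (fun D e => P D e -> Q D e).
Proof.
  intros [p [Hp HP]] [q [Hq HQ]]. exists (fImp p q). split; [now constructor|].
  intros D e. simpl. now rewrite HP, HQ.
Qed.

Lemma Delta0_def_bex t P : Definable Delta0 P ->
  Definable Delta0 (fun D e => exists x, slt x (teval D e t) /\ P D (scons x e)).
Proof.
  intros [r [Hr HP]]. exists (fBEx t r). split; [now constructor|].
  intros D e. simpl. now setoid_rewrite HP.
Qed.

Lemma Delta0_def_ball t P : Definable Delta0 P ->
  Definable Delta0 (fun D e => forall x, slt x (teval D e t) -> P D (scons x e)).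
Proof.
  intros [r [Hr HP]]. exists (fBAll t r). split; [now constructor|].
  intros D e. simpl. now setoid_rewrite HP.
Qed.

Lemma Pi_def_not k P : Definable (Sigma k) P -> Definable (Pi k) (fun D e => ~ P D e).
Proof.
  intros [r [Hr HP]]. destruct (proj1 Sigma_Pi_neg k r Hr) as [r' [Hr' Hsat]].
  exists r'. split; [exact Hr'|]. intros D e. rewrite (Hsat D e). simpl. now rewrite HP.
Qed.

Lemma Pi_def_imp k P Q : Definable (Sigma k) P -> Definable (Pi k) Q ->
  Definable (Pi k) (fun D e => P D e -> Q D e).
Proof.
  intros HP HQ. eapply definable_ext.
  - apply definable_or; [apply Pi_closed_or | apply Pi_def_not, HP | exact HQ].
  - intros D e. split; [tauto|]. intros H. destruct (classic (P D e)); tauto.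
Qed.

Lemma Sigma_def_ex k P : Definable (Sigma (S k)) P ->
  Definable (Sigma (S k)) (fun D e => exists x, P D (scons x e)).
Proof.
  intros [r [Hr HP]]. exists (fEx r). split; [now apply SigmaEx|].
  intros D e. simpl. now setoid_rewrite HP.
Qed.

Lemma Pi_def_all k P : Definable (Pi (S k)) P ->
  Definable (Pi (S k)) (fun D e => forall x, P D (scons x e)).
Proof.
  intros [r [Hr HP]]. exists (fAll r). split; [now apply PiAll|].
  intros D e. simpl. now setoid_rewrite HP.
Qed.

Lemma Pi_def_ball k t P : Definable (Pi k) P ->
  Definable (Pi k) (fun D e => forall x, slt x (teval D e t) -> P D (scons x e)).
Proof.
  destruct k as [|k]; intros HP.
  - apply (definable_weaken Delta0); [apply Delta0_Pi|].
    apply Delta0_def_ball. revert HP. apply definable_weaken, Pi0_Delta0.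
  - eapply definable_ext.
    + apply Pi_def_all, Pi_def_imp; [|exact HP].
      apply Delta0_def_Sigma, (Delta0_def_lt (tvar 0) (tren S t)).
    + intros D e. simpl. now setoid_rewrite teval_shift.
Qed.

Lemma Delta0_def_bexs m : forall t (P : pred), Definable Delta0 P ->
  Definable Delta0 (fun D e => exists l, length l = m /\
    Forall (fun v => slt v (teval D e t)) l /\ P D (app_env l e)).
Proof.
  induction m as [|m IH]; intros t P HP.
  - eapply definable_ext; [exact HP|]. intros D e. split.
    + intros H. now exists [].
    + intros [[|d l] [Hl [_ H]]]; [exact H | discriminate].
  - eapply definable_ext; [apply (Delta0_def_bex t), (IH (tren S t) P HP)|].
    intros D e. simpl. split.
    + intros [x [Hx [l [Hl [Hf H]]]]]. rewrite teval_shift in Hf.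
      exists (l ++ [x]). rewrite <- app_env_snoc, length_app, Forall_app.
      simpl. repeat split; auto; lia.
    + intros [l [Hl [Hf H]]]. destruct (list_snoc_cases l m Hl) as [l' [x [-> Hl']]].
      apply Forall_app in Hf as [Hf' Hx]. apply Forall_inv in Hx.
      exists x. split; [assumption|]. exists l'. rewrite teval_shift, app_env_snoc. auto.
Qed.

Lemma Pi_def_balls k m : forall t (P : pred), Definable (Pi k) P ->
  Definable (Pi k) (fun D e => forall l, length l = m ->
    Forall (fun v => slt v (teval D e t)) l -> P D (app_env l e)).
Proof.
  induction m as [|m IH]; intros t P HP.
  - eapply definable_ext; [exact HP|]. intros D e. split.
    + intros H [|d l] Hl _; [exact H | discriminate].
    + intros H. now apply (H []).
  - eapply definable_ext; [apply (Pi_def_ball k t), (IH (tren S t) P HP)|].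
    intros D e. simpl. split.
    + intros H l Hl Hf. destruct (list_snoc_cases l m Hl) as [l' [x [-> Hl']]].
      apply Forall_app in Hf as [Hf' Hx]. apply Forall_inv in Hx.
      rewrite <- app_env_snoc. apply H; [exact Hx | exact Hl' | now rewrite teval_shift].
    + intros H x Hx l Hl Hf. rewrite teval_shift in Hf. rewrite app_env_snoc. apply H.
      * rewrite length_app; simpl; lia.
      * apply Forall_app; auto.
Qed.

(** * Coding of tuples and of finite sets *)

Definition cantor_pair {D : structure} (x y : D) : D := splus (stimes (splus x y) (splus x y)) x.

Fixpoint tuple_code {D : structure} (l : list D) : D :=
  match l with [] => szero | x :: l => cantor_pair x (tuple_code l) end.

Definition cantor_pair_term (a b : term) : term := tplus (ttimes (tplus a b) (tplus a b)) a.

Fixpoint tuple_code_term (l : list term) : term :=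
  match l with [] => tzero | a :: l => cantor_pair_term a (tuple_code_term l) end.

Lemma teval_tuple_code_term (D : structure) e l :
  teval D e (tuple_code_term l) = tuple_code (map (teval D e) l).
Proof. induction l as [|a l IH]; simpl; [reflexivity | now rewrite IH]. Qed.

(* In the environment [l ++ y :: _] with [length l = m], this term denotes
   the code of [y :: l]. *)
Definition tuple_code_var (m : nat) : term := tuple_code_term (tvar m :: map tvar (seq 0 m)).

Lemma teval_tuple_code_var (D : structure) (l : list D) y e :
  teval D (app_env l (scons y e)) (tuple_code_var (length l)) = tuple_code (y :: l).
Proof.
  unfold tuple_code_var. rewrite teval_tuple_code_term. simpl. f_equal.
  - rewrite app_env_ge by lia. now replace (length l - length l) with 0 by lia.
  - f_equal. rewrite map_map. simpl. generalize (scons y e); clear y e; intros e.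
    induction l as [|d l IH]; simpl; [reflexivity|]. f_equal.
    rewrite <- seq_shift, map_map. exact IH.
Qed.

Definition two : term := tplus tone tone.

Definition subst3 (E : form) (a b c : term) : form :=
  subst (fun i => match i with 0 => c | 1 => b | 2 => a | _ => tzero end) E.

Lemma sat_subst3 (D : structure) E a b c (e : nat -> D) :
  sat D e (subst3 E a b c) <-> sat D (env3 (teval D e a) (teval D e b) (teval D e c)) E.
Proof. unfold subst3. rewrite sat_subst. apply sat_ext. now intros [|[|[|i]]]. Qed.

Lemma Delta0_subst3 E a b c : Delta0 E -> Delta0 (subst3 E a b c).
Proof. apply Delta0_subst. Qed.

(* With [E] the graph of [x^y = z], this says that [t = (2 q + 1) 2^z + r]
   with [r < 2^z]; the bounds [2^z <= t] and [q <= t] make it Delta_0. *)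
Definition bit_formula (E : form) (t z : term) : form :=
  fBEx (tplus t tone) (fAnd (subst3 E two (tren S z) (tvar 0))
    (fBEx (tplus (tren S t) tone) (fBEx (tvar 1)
      (fEq (tren S (tren S (tren S t)))
           (tplus (ttimes (tplus (ttimes (tvar 1) two) tone) (tvar 2)) (tvar 0)))))).

(* Numbers code finite sets by their binary expansions ([has_bit s y] reads
   [y] in [s]) and tuples by iterated Cantor pairing. *)
Section Witnesses.
Variable E : form.
Hypothesis HE0 : Delta0 E.
Variables (n m : nat) (p q0 : form).
Hypothesis Hp : Sigma (S n) p.
Hypothesis Hq0 : Pi n q0.

Definition has_bit (D : structure) (t z : D) : Prop :=
  sat D (scons z (scons t (fun _ => szero))) (bit_formula E (tvar 1) (tvar 0)).

Lemma Delta0_def_has_bit t z : Definable Delta0 (fun D e => has_bit D (teval D e t) (teval D e z)).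
Proof.
  eapply definable_ext.
  - apply (definable_subst Delta0 (fun i => match i with 0 => z | 1 => t | _ => tzero end)
      (bit_formula E (tvar 1) (tvar 0))).
    + exact Delta0_subst.
    + repeat constructor. now apply Delta0_subst3.
  - intros D e. apply sat_ext. now intros [|[|i]].
Qed.

Definition witnessed (D : structure) (t s a : D) : Prop :=
  forall y, slt y a -> has_bit D s y ->
    exists l, length l = m /\ Forall (fun v => slt v t) l /\ has_bit D t (tuple_code (y :: l)).

Definition listed_satisfy (D : structure) (t a x : D) (e : nat -> D) : Prop :=
  forall y, slt y a -> forall l, length l = m -> Forall (fun v => slt v t) l ->
    has_bit D t (tuple_code (y :: l)) -> sat D (app_env l (scons y (scons x e))) q0.

Definition p_fails_outside (D : structure) (s a x : D) (e : nat -> D) : Prop :=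
  forall y, slt y a -> ~ has_bit D s y -> ~ sat D (scons y (scons x e)) p.

Lemma Delta0_def_witnessed it is ia :
  Definable Delta0 (fun D e => witnessed D (e it) (e is) (e ia)).
Proof.
  eapply definable_ext.
  - apply (Delta0_def_ball (tvar ia)), Delta0_def_imp.
    + apply (Delta0_def_has_bit (tvar (S is)) (tvar 0)).
    + apply (Delta0_def_bexs m (tvar (S it))).
      apply (Delta0_def_has_bit (tvar (S it + m)) (tuple_code_var m)).
  - intros D e. unfold witnessed. cbn [teval scons].
    split; intros H y Hy Hb; destruct (H y Hy Hb) as [l [Hl [Hf Hb']]];
      exists l; repeat split; try assumption; subst m;
      rewrite app_env_plus, teval_tuple_code_var in *; exact Hb'.
Qed.

(* Moves the parameters [x] (variable [ix]) and [e] (variables [be], [be + 1],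
   ...) of [q0] to their positions below the [m + 1] bound variables [l], [y]. *)
Definition listed_subst (ix be : nat) : nat -> term :=
  fun i => if Nat.leb i m then tvar i
           else if Nat.eqb i (S m) then tvar (S m + ix) else tvar (i - 1 + be).

Lemma teval_listed_subst (D : structure) (l : list D) y e ix be : length l = m ->
  (fun i => teval D (app_env l (scons y e)) (listed_subst ix be i)) =
  app_env l (scons y (scons (e ix) (fun i => e (be + i)))).
Proof.
  intros Hl. apply functional_extensionality. intros i. unfold listed_subst.
  destruct (Nat.leb_spec i m); [|destruct (Nat.eqb_spec i (S m))]; cbn [teval].
  - destruct (Nat.lt_ge_cases i m); [apply app_env_lt; lia|].
    rewrite !app_env_ge by lia. now replace (i - length l) with 0 by lia.
  - subst i. rewrite !app_env_ge by lia. rewrite Hl.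
    replace (S m + ix - m) with (S ix) by lia. now replace (S m - m) with 1 by lia.
  - rewrite !app_env_ge by lia. rewrite Hl.
    replace (i - 1 + be - m) with (S (be + (i - S (S m)))) by lia.
    replace (i - m) with (S (S (i - S (S m)))) by lia. reflexivity.
Qed.

Lemma Pi_def_listed_satisfy it ia ix be :
  Definable (Pi n) (fun D e => listed_satisfy D (e it) (e ia) (e ix) (fun i => e (be + i))).
Proof.
  eapply definable_ext.
  - apply (Pi_def_ball n (tvar ia)), (Pi_def_balls n m (tvar (S it))), Pi_def_imp.
    + apply Delta0_def_Sigma.
      apply (Delta0_def_has_bit (tvar (S it + m)) (tuple_code_var m)).
    + apply (definable_subst (Pi n) (listed_subst ix be)); [apply Pi_subst | exact Hq0].
  - intros D e. unfold listed_satisfy. cbn [teval scons].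
    split; intros H y Hy l Hl Hf Hb; specialize (H y Hy l Hl Hf);
      rewrite <- Hl, app_env_plus, teval_tuple_code_var in *;
      rewrite ?teval_listed_subst in *; auto.
Qed.

Lemma Pi_def_p_fails_outside is ia ix be :
  Definable (Pi (S n)) (fun D e => p_fails_outside D (e is) (e ia) (e ix) (fun i => e (be + i))).
Proof.
  eapply definable_ext.
  - apply (Pi_def_ball (S n) (tvar ia)), Pi_def_imp.
    + apply Delta0_def_Sigma.
      apply Delta0_def_not, (Delta0_def_has_bit (tvar (S is)) (tvar 0)).
    + apply Pi_def_not.
      apply (definable_subst (Sigma (S n))
               (scons (tvar 0) (scons (tvar (S ix)) (fun i => tvar (S (be + i))))));
        [apply Sigma_subst | exact Hp].
  - intros D e. unfold p_fails_outside. cbn [teval scons].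
    assert (Henv : forall y, (fun i => teval D (scons y e)
        (scons (tvar 0) (scons (tvar (S ix)) (fun i => tvar (S (be + i)))) i)) =
      scons y (scons (e ix) (fun i => e (be + i)))).
    { intros y. apply functional_extensionality. now intros [|[|i]]. }
    now setoid_rewrite Henv.
Qed.
End Witnesses.

Record exp_graph (D : structure) (E : form) : Prop := {
  exp_Delta0 : Delta0 E;
  exp_functional : forall x y z w : D, sat D (env3 x y z) E -> sat D (env3 x y w) E -> z = w;
  exp_zero : forall x z : D, sat D (env3 x szero z) E <-> z = sone;
  exp_succ : forall x y w : D,
    sat D (env3 x (succ y) w) E <-> exists z, sat D (env3 x y z) E /\ w = stimes z x;
  exp_total : forall x y : D, exists z, sat D (env3 x y z) E
}.

Arguments exp_Delta0 {D E}. Arguments exp_functional {D E}. Arguments exp_zero {D E}.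
Arguments exp_succ {D E}. Arguments exp_total {D E}.

Lemma exp_axiom_graph D : exp_axiom D -> exists E, exp_graph D E.
Proof. intros [E (H0 & Hf & Hz & Hs & Ht)]. now exists E. Qed.

(** * Arithmetic in models of I Delta_0 *)

Section IDelta0.
Variable D : structure.
Hypothesis HD : model_IDelta0 D.

Local Notation "x + y" := (splus x y).
Local Notation "x * y" := (stimes x y).
Local Notation "x < y" := (slt x y).
Local Notation "0" := (@szero D).
Local Notation "1" := (@sone D).

Lemma succ_neq_zero (x : D) : x + 1 <> 0. Proof. apply HD. Qed.
Lemma succ_inj (x y : D) : x + 1 = y + 1 -> x = y. Proof. apply HD. Qed.
Lemma add_0_r (x : D) : x + 0 = x. Proof. apply HD. Qed.
Lemma add_succ_r (x y : D) : x + (y + 1) = x + y + 1. Proof. apply HD. Qed.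
Lemma mul_0_r (x : D) : x * 0 = 0. Proof. apply HD. Qed.
Lemma mul_succ_r (x y : D) : x * (y + 1) = x * y + x. Proof. apply HD. Qed.
Lemma lt_iff_succ_add (x y : D) : x < y <-> exists z, z + 1 + x = y. Proof. apply HD. Qed.

Lemma zero_or_succ (x : D) : x = 0 \/ exists y, x = y + 1.
Proof. destruct (classic (x = 0)); [now left | right; now apply HD]. Qed.

Lemma Delta0_ind p : Delta0 p -> forall e : nat -> D,
  sat D (scons 0 e) p -> (forall x, sat D (scons x e) p -> sat D (scons (x + 1) e) p) ->
  forall x, sat D (scons x e) p.
Proof. apply HD. Qed.

Definition env0 : nat -> D := fun _ => 0.

Lemma add_0_l (x : D) : 0 + x = x.
Proof.
  revert x.
  apply (Delta0_ind (fEq (tplus tzero (tvar 0)) (tvar 0)) ltac:(repeat constructor) env0); simpl.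
  - apply add_0_r.
  - intros x H. now rewrite add_succ_r, H.
Qed.

Lemma add_succ_l (x y : D) : x + 1 + y = x + y + 1.
Proof.
  revert y.
  apply (Delta0_ind (fEq (tplus (tplus (tvar 1) tone) (tvar 0))
                         (tplus (tplus (tvar 1) (tvar 0)) tone))
    ltac:(repeat constructor) (scons x env0)); simpl.
  - now rewrite !add_0_r.
  - intros y H. now rewrite !add_succ_r, H.
Qed.

Lemma add_comm (x y : D) : x + y = y + x.
Proof.
  revert y.
  apply (Delta0_ind (fEq (tplus (tvar 1) (tvar 0)) (tplus (tvar 0) (tvar 1)))
    ltac:(repeat constructor) (scons x env0)); simpl.
  - now rewrite add_0_r, add_0_l.
  - intros y H. now rewrite add_succ_r, add_succ_l, H.
Qed.

Lemma add_assoc (x y z : D) : x + (y + z) = x + y + z.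
Proof.
  revert z.
  apply (Delta0_ind (fEq (tplus (tvar 2) (tplus (tvar 1) (tvar 0)))
                         (tplus (tplus (tvar 2) (tvar 1)) (tvar 0)))
    ltac:(repeat constructor) (scons y (scons x env0))); simpl.
  - now rewrite !add_0_r.
  - intros z H. now rewrite !add_succ_r, H.
Qed.

Lemma mul_0_l (x : D) : 0 * x = 0.
Proof.
  revert x.
  apply (Delta0_ind (fEq (ttimes tzero (tvar 0)) tzero) ltac:(repeat constructor) env0); simpl.
  - apply mul_0_r.
  - intros x H. now rewrite mul_succ_r, H, add_0_r.
Qed.

Lemma mul_succ_l (x y : D) : (x + 1) * y = x * y + y.
Proof.
  revert y.
  apply (Delta0_ind (fEq (ttimes (tplus (tvar 1) tone) (tvar 0))
                         (tplus (ttimes (tvar 1) (tvar 0)) (tvar 0)))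
    ltac:(repeat constructor) (scons x env0)); simpl.
  - now rewrite !mul_0_r, add_0_r.
  - intros y H. rewrite !mul_succ_r, H, <- !add_assoc. f_equal.
    now rewrite !add_assoc, (add_comm y x).
Qed.

Lemma mul_comm (x y : D) : x * y = y * x.
Proof.
  revert y.
  apply (Delta0_ind (fEq (ttimes (tvar 1) (tvar 0)) (ttimes (tvar 0) (tvar 1)))
    ltac:(repeat constructor) (scons x env0)); simpl.
  - now rewrite mul_0_r, mul_0_l.
  - intros y H. now rewrite mul_succ_r, mul_succ_l, H.
Qed.

Lemma mul_add_distr_l (x y z : D) : x * (y + z) = x * y + x * z.
Proof.
  revert z.
  apply (Delta0_ind (fEq (ttimes (tvar 2) (tplus (tvar 1) (tvar 0)))
                         (tplus (ttimes (tvar 2) (tvar 1)) (ttimes (tvar 2) (tvar 0))))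
    ltac:(repeat constructor) (scons y (scons x env0))); simpl.
  - now rewrite add_0_r, mul_0_r, add_0_r.
  - intros z H. now rewrite add_succ_r, !mul_succ_r, H, add_assoc.
Qed.

Lemma mul_assoc (x y z : D) : x * (y * z) = x * y * z.
Proof.
  revert z.
  apply (Delta0_ind (fEq (ttimes (tvar 2) (ttimes (tvar 1) (tvar 0)))
                         (ttimes (ttimes (tvar 2) (tvar 1)) (tvar 0)))
    ltac:(repeat constructor) (scons y (scons x env0))); simpl.
  - now rewrite !mul_0_r.
  - intros z H. now rewrite !mul_succ_r, mul_add_distr_l, H.
Qed.

Lemma mul_1_l (x : D) : 1 * x = x.
Proof.
  rewrite <- (add_0_l 1), mul_succ_l, mul_0_l. apply add_0_l.
Qed.

Lemma IDelta0_semiring : semi_ring_theory (R := D) 0 1 splus stimes eq.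
Proof.
  constructor; auto using add_0_l, add_comm, add_assoc, mul_1_l, mul_0_l, mul_comm, mul_assoc.
  intros x y z. now rewrite mul_comm, mul_add_distr_l, !(mul_comm z).
Qed.

Add Ring D_semiring : IDelta0_semiring.

Lemma add_cancel_r (x y z : D) : x + z = y + z -> x = y.
Proof.
  revert z.
  apply (Delta0_ind (fImp (fEq (tplus (tvar 2) (tvar 0)) (tplus (tvar 1) (tvar 0)))
                          (fEq (tvar 2) (tvar 1)))
    ltac:(repeat constructor) (scons y (scons x env0))); simpl.
  - now rewrite !add_0_r.
  - intros z H E. apply H, succ_inj. now rewrite <- !add_succ_r.
Qed.

Lemma add_cancel_l (x y z : D) : z + x = z + y -> x = y.
Proof. rewrite !(add_comm z). apply add_cancel_r. Qed.

Lemma add_eq_0 (x y : D) : x + y = 0 -> x = 0 /\ y = 0.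
Proof.
  intros H. destruct (zero_or_succ y) as [->|[y' ->]].
  - now rewrite add_0_r in H.
  - rewrite add_succ_r in H. now apply succ_neq_zero in H.
Qed.

Definition sle (x y : D) : Prop := x < y \/ x = y.
Local Notation "x <= y" := (sle x y).

Lemma lt_iff_add (x y : D) : x < y <-> exists z, x + z + 1 = y.
Proof. rewrite lt_iff_succ_add. split; intros [z Hz]; exists z; rewrite <- Hz; ring. Qed.

Lemma le_iff_add (x y : D) : x <= y <-> exists z, x + z = y.
Proof.
  unfold sle. rewrite lt_iff_add. split.
  - intros [[z Hz]| ->]; [exists (z + 1) | exists 0]; rewrite <- ?Hz; ring.
  - intros [z Hz]. destruct (zero_or_succ z) as [->|[z' ->]].
    + right. rewrite <- Hz; ring.
    + left. exists z'. rewrite <- Hz; ring.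
Qed.

Lemma lt_irrefl (x : D) : ~ x < x.
Proof.
  rewrite lt_iff_add. intros [z Hz]. apply (succ_neq_zero z), (add_cancel_l _ _ x).
  now rewrite add_0_r, add_assoc.
Qed.

Lemma lt_trans (x y z : D) : x < y -> y < z -> x < z.
Proof.
  rewrite !lt_iff_add. intros [a Ha] [b Hb]. exists (a + b + 1). rewrite <- Hb, <- Ha. ring.
Qed.

Lemma le_trans (x y z : D) : x <= y -> y <= z -> x <= z.
Proof. rewrite !le_iff_add. intros [a Ha] [b Hb]. exists (a + b). rewrite <- Hb, <- Ha; ring. Qed.

Lemma lt_le_trans (x y z : D) : x < y -> y <= z -> x < z.
Proof. intros H [H'| <-]; [eapply lt_trans|]; eauto. Qed.

Lemma le_lt_trans (x y z : D) : x <= y -> y < z -> x < z.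
Proof. intros [H'| ->] H; [eapply lt_trans|]; eauto. Qed.

Lemma not_lt_0 (x : D) : ~ x < 0.
Proof. rewrite lt_iff_add. intros [z Hz]. exact (succ_neq_zero _ Hz). Qed.

Lemma lt_succ_r (x y : D) : x < y + 1 <-> x <= y.
Proof.
  rewrite le_iff_add, lt_iff_add. split; intros [z Hz]; exists z.
  - now apply (add_cancel_r _ _ 1).
  - now rewrite Hz.
Qed.

Lemma lt_succ_diag (x : D) : x < x + 1.
Proof. apply lt_succ_r. now right. Qed.

Lemma lt_0_succ (x : D) : 0 < x + 1.
Proof. rewrite lt_iff_add. exists x. ring. Qed.

Lemma lt_le_succ (x y : D) : x < y <-> x + 1 <= y.
Proof. rewrite lt_iff_add, le_iff_add. split; intros [z Hz]; exists z; rewrite <- Hz; ring. Qed.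

Lemma lt_total (x y : D) : x < y \/ x = y \/ y < x.
Proof.
  revert y.
  apply (Delta0_ind (fOr (fLt (tvar 1) (tvar 0))
                         (fOr (fEq (tvar 1) (tvar 0)) (fLt (tvar 0) (tvar 1))))
    ltac:(repeat constructor) (scons x env0)); simpl.
  - destruct (zero_or_succ x) as [->|[x' ->]]; [now right; left | right; right; apply lt_0_succ].
  - intros y [H|[->|H]].
    + left. apply lt_succ_r. now left.
    + left. apply lt_succ_diag.
    + apply lt_le_succ in H as [H| <-]; auto.
Qed.

Lemma le_0_l (x : D) : 0 <= x.
Proof. rewrite le_iff_add. exists x. apply add_0_l. Qed.

Lemma le_add_r (x y : D) : x <= x + y.
Proof. rewrite le_iff_add. now exists y. Qed.

Lemma le_add_l (x y : D) : x <= y + x.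
Proof. rewrite add_comm. apply le_add_r. Qed.

Lemma add_lt_mono_r (x y z : D) : x < y <-> x + z < y + z.
Proof.
  rewrite !lt_iff_add. split; intros [a Ha]; exists a.
  - rewrite <- Ha; ring.
  - apply (add_cancel_r _ _ z). rewrite <- Ha; ring.
Qed.

Lemma add_lt_mono_l (x y z : D) : x < y <-> z + x < z + y.
Proof. rewrite !(add_comm z). apply add_lt_mono_r. Qed.

Lemma lt_add_pos_r (x y : D) : 0 < y -> x < x + y.
Proof. rewrite !lt_iff_add. intros [z Hz]. exists z. rewrite <- Hz. ring. Qed.

Lemma mul_le_mono_r (x y z : D) : x <= y -> x * z <= y * z.
Proof. rewrite !le_iff_add. intros [a Ha]. exists (a * z). rewrite <- Ha; ring. Qed.

Lemma mul_le_mono_l (x y z : D) : x <= y -> z * x <= z * y.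
Proof. rewrite !(mul_comm z). apply mul_le_mono_r. Qed.

Lemma pos_neq_0 (x : D) : 0 < x <-> x <> 0.
Proof.
  split.
  - intros H ->. exact (lt_irrefl _ H).
  - intros H. destruct (zero_or_succ x) as [->|[y ->]]; [contradiction | apply lt_0_succ].
Qed.

Lemma le_mul_pos_r (x y : D) : 0 < y -> x <= x * y.
Proof.
  intros Hy. apply pos_neq_0 in Hy. destruct (zero_or_succ y) as [->|[y' ->]]; [contradiction|].
  rewrite le_iff_add. exists (x * y'). ring.
Qed.

Lemma lt_1_r (x : D) : x < 1 <-> x = 0.
Proof.
  rewrite <- (add_0_l 1), lt_succ_r. split; [|intros ->; now right].
  intros [H|H]; [now apply not_lt_0 in H | exact H].
Qed.

Lemma div_mod (d : D) : 0 < d -> forall s, exists q r, r < d /\ s = q * d + r.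
Proof.
  intros Hd s.
  assert (H : sat D (scons s (scons d env0))
    (fBEx (tplus (tvar 0) tone)
       (fBEx (tvar 2) (fEq (tvar 2) (tplus (ttimes (tvar 1) (tvar 3)) (tvar 0)))))).
  { apply Delta0_ind; [repeat constructor | |].
    - simpl. exists 0. split; [apply lt_0_succ|]. exists 0. split; [exact Hd | ring].
    - clear s. intros s. simpl. intros [q [Hq [r [Hr E]]]].
      apply lt_le_succ in Hr as [Hr| Hr].
      + exists q. split; [eapply lt_trans; [exact Hq | apply lt_succ_diag]|].
        exists (r + 1). split; [exact Hr | rewrite E; ring].
      + exists (q + 1). split; [now apply add_lt_mono_r|].
        exists 0. split; [exact Hd | rewrite E, <- Hr; ring]. }
  simpl in H. destruct H as [q [_ [r [Hr E]]]]. now exists q, r.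
Qed.

Lemma div_mod_lt (d q q' r r' : D) : r < d -> q < q' -> q * d + r < q' * d + r'.
Proof.
  intros Hr Hq. apply lt_le_succ, (mul_le_mono_r _ _ d) in Hq. rewrite mul_succ_l in Hq.
  apply (lt_le_trans _ (q * d + d)); [now apply add_lt_mono_l|].
  eapply le_trans; [exact Hq | apply le_add_r].
Qed.

Lemma div_mod_unique (d q r q' r' : D) :
  r < d -> r' < d -> q * d + r = q' * d + r' -> q = q' /\ r = r'.
Proof.
  intros Hr Hr' E. destruct (lt_total q q') as [Hq|[<-|Hq]].
  - apply (div_mod_lt d q q' r r' Hr) in Hq. rewrite E in Hq. now apply lt_irrefl in Hq.
  - split; [reflexivity|]. now apply add_cancel_l in E.
  - apply (div_mod_lt d q' q r' r Hr') in Hq. rewrite E in Hq. now apply lt_irrefl in Hq.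
Qed.

Lemma square_le_mono (x y : D) : x <= y -> x * x <= y * y.
Proof.
  intros H. apply (le_trans _ (x * y)); [apply mul_le_mono_l | apply mul_le_mono_r]; exact H.
Qed.

(* The pairs with [x + y = w] fill the interval [[w^2, w^2 + w]]. *)
Lemma cantor_pair_lt_next_square (x y : D) : cantor_pair x y < (x + y + 1) * (x + y + 1).
Proof.
  unfold cantor_pair.
  replace ((x + y + 1) * (x + y + 1)) with ((x + y) * (x + y) + (x + (y + (x + y) + 1))) by ring.
  apply add_lt_mono_l, lt_add_pos_r, lt_0_succ.
Qed.

Lemma cantor_pair_inj (x y x' y' : D) : cantor_pair x y = cantor_pair x' y' -> x = x' /\ y = y'.
Proof.
  intros E.
  assert (Hsum : forall a b a' b' : D, cantor_pair a b = cantor_pair a' b' -> ~ a + b < a' + b').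
  { intros a b a' b' Eab H. apply lt_le_succ, square_le_mono in H.
    apply (lt_irrefl (cantor_pair a b)). rewrite Eab at 2.
    eapply lt_le_trans; [apply cantor_pair_lt_next_square|].
    eapply le_trans; [exact H | apply le_add_r]. }
  assert (Hs : x + y = x' + y').
  { destruct (lt_total (x + y) (x' + y')) as [H|[H|H]]; [|exact H|];
      exfalso; [exact (Hsum _ _ _ _ E H) | exact (Hsum _ _ _ _ (eq_sym E) H)]. }
  unfold cantor_pair in E. rewrite Hs in E. apply add_cancel_l in E as ->.
  split; [reflexivity|]. now apply add_cancel_l in Hs.
Qed.

Lemma cantor_pair_ge_l (x y : D) : x <= cantor_pair x y.
Proof. apply le_add_l. Qed.

Lemma cantor_pair_ge_r (x y : D) : y <= cantor_pair x y.
Proof.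
  destruct (classic (x + y = 0)) as [H|H].
  - apply add_eq_0 in H as [_ ->]. apply le_0_l.
  - apply (le_trans _ (x + y)); [apply le_add_l|].
    apply (le_trans _ ((x + y) * (x + y))); [apply le_mul_pos_r, pos_neq_0, H | apply le_add_r].
Qed.

Lemma tuple_code_inj (l l' : list D) :
  length l = length l' -> tuple_code l = tuple_code l' -> l = l'.
Proof.
  revert l'; induction l as [|x l IH]; intros [|x' l'] Hl E; try discriminate; [reflexivity|].
  simpl in E. apply cantor_pair_inj in E as [-> E]. f_equal. apply IH; [now injection Hl | exact E].
Qed.

Lemma tuple_code_ge (l : list D) v : In v l -> v <= tuple_code l.
Proof.
  induction l as [|x l IH]; simpl; [contradiction|]. intros [->|H]; [apply cantor_pair_ge_l|].
  apply (le_trans _ (tuple_code l)); [now apply IH | apply cantor_pair_ge_r].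
Qed.

(** ** Exponentiation and binary expansions *)

Section Exp.
Variable E : form.
Hypothesis HE : exp_graph D E.

Local Notation "2" := (1 + 1).

Definition pow2 (y : D) : D := proj1_sig (constructive_indefinite_description _ (exp_total HE 2 y)).

Lemma pow2_spec y : sat D (env3 2 y (pow2 y)) E.
Proof. unfold pow2. now destruct constructive_indefinite_description. Qed.

Lemma pow2_iff y z : sat D (env3 2 y z) E <-> z = pow2 y.
Proof.
  split; [|intros ->; apply pow2_spec].
  intros H. eapply (exp_functional HE); [exact H | apply pow2_spec].
Qed.

Lemma pow2_succ y : pow2 (y + 1) = pow2 y * 2.
Proof.
  destruct (proj1 ((exp_succ HE) _ _ _) (pow2_spec (y + 1))) as [z [Hz ->]].
  now apply pow2_iff in Hz as ->.
Qed.

Lemma pow2_gt y : y < pow2 y.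
Proof.
  (* Induction on [y] for [forall v <= W, 2^y = v -> y < v]; the bound [W]
     keeps the formula Delta_0, and [W := 2^y] gives the claim. *)
  assert (H : forall W y, sat D (scons y (scons W env0))
     (fBAll (tplus (tvar 1) tone) (fImp (subst3 E two (tvar 1) (tvar 0)) (fLt (tvar 1) (tvar 0))))).
  { intros W. apply Delta0_ind; [repeat constructor; now apply Delta0_subst3, (exp_Delta0 HE) | |].
    - simpl. intros v _ Hv. rewrite sat_subst3 in Hv. simpl in Hv. apply (exp_zero HE) in Hv as ->.
      now apply lt_1_r.
    - clear y. intros y IH v Hv Hv'. simpl in *. rewrite sat_subst3 in Hv'. simpl in Hv'.
      apply (exp_succ HE) in Hv' as [z [Hz ->]].
      assert (Hz2 : z <= z * 2) by apply le_mul_pos_r, lt_0_succ.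
      specialize (IH z (le_lt_trans _ _ _ Hz2 Hv)). rewrite sat_subst3 in IH.
      apply lt_le_succ in IH; [|exact Hz]. apply (le_lt_trans _ z); [exact IH|].
      replace (z * 2) with (z + z) by ring. apply lt_add_pos_r.
      eapply lt_le_trans; [apply lt_0_succ | exact IH]. }
  specialize (H (pow2 y) y). simpl in H.
  specialize (H (pow2 y) (lt_succ_diag _)). rewrite sat_subst3 in H. apply H, pow2_spec.
Qed.

Lemma pow2_pos y : 0 < pow2 y.
Proof. eapply le_lt_trans; [apply le_0_l | apply pow2_gt]. Qed.

Lemma pow2_add i j : pow2 (i + j) = pow2 i * pow2 j.
Proof.
  (* As for [pow2_gt], with [forall v <= W, 2^j = v -> 2^(i + j) = 2^i v]. *)
  assert (H : forall W j, sat D (scons j (scons (pow2 i) (scons i (scons W env0))))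
     (fBAll (tplus (tvar 3) tone) (fImp (subst3 E two (tvar 1) (tvar 0))
        (subst3 E two (tplus (tvar 3) (tvar 1)) (ttimes (tvar 2) (tvar 0)))))).
  { intros W. apply Delta0_ind; [repeat constructor; now apply Delta0_subst3, (exp_Delta0 HE) | |].
    - simpl. intros v _ Hv. rewrite !sat_subst3 in *. simpl in *. apply (exp_zero HE) in Hv as ->.
      rewrite add_0_r. replace (pow2 i * 1) with (pow2 i) by ring. apply pow2_spec.
    - clear j. intros j IH v Hv Hv'. simpl in *. rewrite !sat_subst3 in *. simpl in *.
      apply (exp_succ HE) in Hv' as [z [Hz ->]].
      assert (Hz2 : z <= z * 2) by apply le_mul_pos_r, lt_0_succ.
      specialize (IH z (le_lt_trans _ _ _ Hz2 Hv)). rewrite !sat_subst3 in IH. specialize (IH Hz).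
      rewrite add_succ_r. apply (exp_succ HE). exists (pow2 i * z). split; [exact IH | ring]. }
  specialize (H (pow2 j) j). simpl in H. specialize (H (pow2 j) (lt_succ_diag _)).
  rewrite !sat_subst3 in H. simpl in H. symmetry. apply pow2_iff, H, pow2_spec.
Qed.

Lemma pow2_split z0 z : z0 < z -> exists T, pow2 z = pow2 z0 * 2 * T /\ 0 < T.
Proof.
  intros H. apply lt_iff_add in H as [d <-]. exists (pow2 d). split.
  - replace (z0 + d + 1) with (z0 + 1 + d) by ring. rewrite pow2_add, pow2_succ. ring.
  - apply pow2_pos.
Qed.

Lemma pow2_div_mod t z : exists q r, r < pow2 z /\ t = q * pow2 z + r.
Proof. apply div_mod, pow2_pos. Qed.

Definition is_odd (q : D) : Prop := exists h, q = h * 2 + 1.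

Lemma even_or_odd q : exists h, q = h * 2 \/ q = h * 2 + 1.
Proof.
  destruct (div_mod 2 (lt_0_succ 1) q) as [h [r [Hr ->]]]. exists h.
  apply lt_succ_r in Hr as [Hr| ->]; [left | now right].
  apply lt_1_r in Hr as ->. now rewrite add_0_r.
Qed.

Lemma not_odd_double h : ~ is_odd (h * 2).
Proof.
  intros [h' Eh]. rewrite <- (add_0_r (h * 2)) in Eh.
  apply div_mod_unique in Eh as [_ Eh]; [| apply lt_0_succ | apply lt_succ_diag].
  apply (succ_neq_zero 0). now rewrite add_0_l.
Qed.

Lemma odd_add_double q h : is_odd (q + h * 2) <-> is_odd q.
Proof.
  destruct (even_or_odd q) as [h' [-> | ->]].
  - replace (h' * 2 + h * 2) with ((h' + h) * 2) by ring.
    split; intros H; now apply not_odd_double in H.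
  - split; intros _; [now exists h' | exists (h' + h); ring].
Qed.

Definition bit (t z : D) : Prop := exists q r, r < pow2 z /\ t = (q * 2 + 1) * pow2 z + r.

Lemma bit_iff_odd t z q r : r < pow2 z -> t = q * pow2 z + r -> (bit t z <-> is_odd q).
Proof.
  intros Hr ->. split.
  - intros [q' [r' [Hr' Et]]]. exists q'. now apply div_mod_unique in Et as [-> _].
  - intros [h ->]. now exists h, r.
Qed.

Lemma sat_bit_formula t z (e : nat -> D) :
  sat D e (bit_formula E t z) <-> bit (teval D e t) (teval D e z).
Proof.
  unfold bit_formula. simpl. setoid_rewrite sat_subst3. simpl.
  repeat setoid_rewrite teval_shift. split.
  - intros [P [_ [HP [q [_ [r [Hr Et]]]]]]]. apply pow2_iff in HP as ->.
    exists q, r. split; [exact Hr | rewrite Et; ring].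
  - intros [q [r [Hr Et]]]. set (P := pow2 (teval D e z)) in *. set (t' := teval D e t) in *.
    assert (Hq : q <= (q * 2 + 1) * P).
    { apply (le_trans _ (q * 2 + 1)); [|apply le_mul_pos_r, pow2_pos].
      replace (q * 2 + 1) with (q + (q + 1)) by ring. apply le_add_r. }
    assert (HP : P <= (q * 2 + 1) * P).
    { replace ((q * 2 + 1) * P) with (q * 2 * P + P) by ring. apply le_add_l. }
    exists P. split; [apply lt_succ_r; rewrite Et; eapply le_trans; [exact HP | apply le_add_r]|].
    split; [apply pow2_spec|].
    exists q. split; [apply lt_succ_r; rewrite Et; eapply le_trans; [exact Hq | apply le_add_r]|].
    exists r. split; [exact Hr | rewrite Et; ring].
Qed.

Lemma has_bit_iff t z : has_bit E D t z <-> bit t z.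
Proof. unfold has_bit. now rewrite sat_bit_formula. Qed.

Lemma not_bit_0 z : ~ bit 0 z.
Proof.
  intros [q [r [_ Et]]]. apply (lt_irrefl 0). rewrite Et at 2.
  eapply lt_le_trans; [apply pow2_pos|].
  eapply le_trans; [apply le_mul_pos_r, lt_0_succ | rewrite mul_comm; apply le_add_r].
Qed.

Lemma bit_lt t z : bit t z -> z < t.
Proof.
  intros [q [r [_ ->]]]. eapply lt_le_trans; [apply pow2_gt|].
  eapply le_trans; [|apply le_add_r]. rewrite mul_succ_l. apply le_add_l.
Qed.

Lemma not_bit_even t z q r : ~ bit t z -> r < pow2 z -> t = q * pow2 z + r ->
  exists h, q = h * 2.
Proof.
  intros Hn Hr Et. destruct (even_or_odd q) as [h [Eq|Eq]]; [now exists h|].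
  exfalso. apply Hn, (bit_iff_odd _ _ _ _ Hr Et). now exists h.
Qed.

Lemma clear_bit_split t z0 z : ~ bit t z0 -> z0 < z ->
  exists u r, r + pow2 z0 < pow2 z /\ t = u * pow2 z + r.
Proof.
  intros Hn Hz. destruct (pow2_div_mod t z0) as [Q [R [HR Et]]].
  destruct (not_bit_even _ _ _ _ Hn HR Et) as [h EQ].
  destruct (pow2_split _ _ Hz) as [T [HT HTpos]].
  destruct (div_mod T HTpos h) as [u [v [Hv Eh]]].
  exists u, (v * (pow2 z0 * 2) + R). split.
  - apply lt_le_succ in Hv. apply (mul_le_mono_r _ _ (pow2 z0 * 2)) in Hv.
    eapply lt_le_trans; [|rewrite HT, (mul_comm _ T); exact Hv].
    replace ((v + 1) * (pow2 z0 * 2)) with (v * (pow2 z0 * 2) + (pow2 z0 + pow2 z0)) by ring.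
    rewrite <- add_assoc. now apply add_lt_mono_l, add_lt_mono_r.
  - rewrite Et, EQ, Eh, HT. ring.
Qed.

Lemma bit_add_pow2 t z0 z : ~ bit t z0 -> (bit (t + pow2 z0) z <-> bit t z \/ z = z0).
Proof.
  intros Hn. destruct (lt_total z z0) as [Hlt|[<-|Hgt]].
  - destruct (pow2_split _ _ Hlt) as [T [HT _]]. destruct (pow2_div_mod t z) as [q [r [Hr Et]]].
    assert (Et' : t + pow2 z0 = (q + T * 2) * pow2 z + r) by (rewrite Et, HT; ring).
    rewrite (bit_iff_odd _ _ _ _ Hr Et'), (bit_iff_odd _ _ _ _ Hr Et), odd_add_double.
    split; [now left | intros [H| ->]; [exact H | now apply lt_irrefl in Hlt]].
  - split; intros _; [now right|]. destruct (pow2_div_mod t z) as [q [r [Hr Et]]].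
    destruct (not_bit_even _ _ _ _ Hn Hr Et) as [h Eq].
    exists h, r. split; [exact Hr | rewrite Et, Eq; ring].
  - destruct (clear_bit_split _ _ _ Hn Hgt) as [u [r [Hr Et]]].
    assert (Hr' : r < pow2 z) by (eapply le_lt_trans; [apply le_add_r | exact Hr]).
    assert (Et' : t + pow2 z0 = u * pow2 z + (r + pow2 z0)) by (rewrite Et; ring).
    rewrite (bit_iff_odd _ _ _ _ Hr Et'), (bit_iff_odd _ _ _ _ Hr' Et).
    split; [now left | intros [H| ->]; [exact H | now apply lt_irrefl in Hgt]].
Qed.

Lemma add_pow2_lt t z0 a : t < pow2 a -> z0 < a -> ~ bit t z0 -> t + pow2 z0 < pow2 a.
Proof.
  intros Ht Hz Hn. destruct (clear_bit_split _ _ _ Hn Hz) as [u [r [Hr Et]]].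
  destruct (zero_or_succ u) as [->|[u' ->]].
  - now rewrite Et, mul_0_l, add_0_l.
  - exfalso. apply (lt_irrefl t). eapply lt_le_trans; [exact Ht|]. rewrite Et, mul_succ_l.
    eapply le_trans; [apply le_add_l | apply le_add_r].
Qed.

Lemma bit_insert t z :
  exists t', bit t' z /\ (forall z', bit t' z' <-> bit t z' \/ z' = z) /\ t <= t'.
Proof.
  destruct (classic (bit t z)) as [Hb|Hn].
  - exists t. split; [exact Hb|]. split; [|now right].
    intros z'. split; [now left | intros [H| ->]; exact H || exact Hb].
  - exists (t + pow2 z). split; [apply (bit_add_pow2 _ _ _ Hn); now right|].
    split; [intros z'; exact (bit_add_pow2 _ _ _ Hn) | apply le_add_r].
Qed.

Lemma witnesses_extend m q0 (s t a x y : D) e l :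
  s < pow2 a -> y < a -> ~ bit s y ->
  witnessed E m D t s a -> listed_satisfy E m q0 D t a x e ->
  length l = m -> sat D (app_env l (scons y (scons x e))) q0 ->
  exists t', s + pow2 y < pow2 a /\ witnessed E m D t' (s + pow2 y) a /\
    listed_satisfy E m q0 D t' a x e.
Proof.
  intros Hs Hy Hny Hwit Hsat Hl Hq0.
  destruct (bit_insert t (tuple_code (y :: l))) as [t' [Hnew [Hbits Htt']]].
  exists t'. split; [now apply add_pow2_lt|]. split.
  - intros y' Hy' Hb. apply has_bit_iff, (bit_add_pow2 _ _ _ Hny) in Hb as [Hb| ->].
    + destruct (Hwit y' Hy' (proj2 (has_bit_iff _ _) Hb)) as [l' [Hl' [Hf Hb']]].
      exists l'. repeat split; [exact Hl' | |].
      * eapply Forall_impl; [|exact Hf]. intros v Hv. eapply lt_le_trans; [exact Hv | exact Htt'].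
      * apply has_bit_iff, Hbits. left. now apply has_bit_iff.
    + exists l. repeat split; [exact Hl | | now apply has_bit_iff].
      apply Forall_forall. intros v Hv. eapply le_lt_trans; [|apply bit_lt, Hnew].
      eapply le_trans; [apply tuple_code_ge, Hv | apply cantor_pair_ge_r].
  - intros y' Hy' l' Hl' Hf Hb. apply has_bit_iff, Hbits in Hb as [Hb|Heq].
    + apply Hsat; [exact Hy' | exact Hl' | | now apply has_bit_iff].
      apply Forall_forall. intros v Hv. eapply le_lt_trans; [|apply bit_lt, Hb].
      apply tuple_code_ge. now right.
    + apply tuple_code_inj in Heq as Heq'; [|simpl; congruence]. injection Heq' as -> ->.
      exact Hq0.
Qed.

End Exp.

End IDelta0.

Section Main.
Variables (M K : structure) (f : embedding M K) (n : nat).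
Hypothesis HK : model_IDelta0 K.
Hypothesis Hend : end_extension f.
Hypothesis Helem : Sigma_elementary (S (S n)) f.
Hypothesis HMI : M_ISigma (S n) f.
Hypothesis HexpK : exp_axiom K.
Hypothesis Hproper : proper_extension f.

Local Notation fenv e := (fun i => emb f (e i)).

Lemma transfer (P : pred) : Definable (Sigma (S (S n))) P -> forall e, P M e <-> P K (fenv e).
Proof. intros [r [Hr HP]] e. rewrite <- !HP. now apply Helem. Qed.

Lemma below_standard (y : K) (a : M) : slt y (f a) -> exists y0, f y0 = y /\ slt y0 a.
Proof.
  intros H. destruct (classic (in_image f y)) as [[y0 <-]|Hn].
  - exists y0. split; [reflexivity | now apply (emb_lt _ _ f)].
  - exfalso. apply (lt_irrefl K HK y). apply (lt_trans K HK _ (f a)); [exact H | now apply Hend].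
Qed.

Lemma M_ISigma_jump (P : pred) (e : nat -> K) (b : M) :
  Definable (Sigma (S n)) P -> P K (scons szero e) -> ~ P K (scons (f b) e) ->
  exists c, P K (scons c e) /\ ~ P K (scons (succ c) e).
Proof.
  intros [r [Hr HP]] H0 Hb. apply NNPP. intros Hjump. apply Hb, HP.
  apply (HMI r Hr e (splus b sone)).
  - now apply HP.
  - intros x _ Hx. apply HP. apply NNPP. intros Hx'. apply Hjump. exists x. now rewrite <- HP.
  - rewrite emb_plus, emb_one. apply lt_succ_diag, HK.
Qed.

Section Counterexample.
Variables (p q : form) (e : nat -> M) (a : M).
Hypothesis Hp : Sigma (S n) p.
Hypothesis Hq : Pi (S n) q.
Hypothesis Hbounded : forall y, slt y a ->
  exists b, forall x, slt b x -> ~ sat M (scons y (scons x e)) (fAnd p q).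

Lemma p_and_q_fail_nonstandard (k : K) : ~ in_image f k ->
  forall y, slt y a -> ~ sat K (scons (f y) (scons k (fenv e))) (fAnd p q).
Proof.
  intros Hk y Hy Hpq. destruct (Hbounded y Hy) as [b Hb].
  set (s := scons (tvar 2) (scons (tvar 0) (fun i => tvar (3 + i)))).
  set (P := fun (D : structure) (env : nat -> D) => exists x, slt (env 0) x /\
    sat D (scons (env 1) (scons x (fun i => env (2 + i)))) (fAnd p q)).
  assert (HP : Definable (Sigma (S (S n))) P).
  { eapply definable_ext.
    - apply Sigma_def_ex, definable_and; [apply Sigma_closed_and | |].
      + apply Delta0_def_Sigma, (Delta0_def_lt (tvar 1) (tvar 0)).
      + apply definable_and; [apply Sigma_closed_and | |].
        * apply (definable_subst _ s p); [apply Sigma_subst | now apply Sigma_succ].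
        * apply (definable_subst _ s q); [apply Sigma_subst | now apply SigmaPi].
    - intros D env. unfold P. simpl.
      assert (Hs : forall x, (fun i => teval D (scons x env) (s i)) =
                             scons (env 1) (scons x (fun i => env (2 + i)))).
      { intros x. apply functional_extensionality. now intros [|[|i]]. }
      now setoid_rewrite Hs. }
  assert (HPK : P K (fenv (scons b (scons y e)))).
  { exists k. split; [now apply Hend | exact Hpq]. }
  apply (transfer P HP) in HPK as [x [Hx Hpqx]]. exact (Hb x Hx Hpqx).
Qed.

Variable EK : form.
Hypothesis HEK : exp_graph K EK.
Variables (m : nat) (q' : form).
Hypothesis Hq' : Pi n q'.
Hypothesis Hq_iff : forall D env,
  sat D env q <-> forall l : list D, length l = m -> ~ sat D (app_env l env) q'.

Local Notation pow2K := (pow2 K EK HEK).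
Local Notation bitK := (bit K EK HEK).

Lemma pow2_standard : exists z0, f z0 = pow2K (f a).
Proof.
  assert (HE0 := exp_Delta0 HEK).
  assert (HR : Definable (Sigma (S (S n)))
                 (fun D env => sat D (env3 (splus sone sone) (env 1) (env 0)) EK)).
  { eapply definable_ext.
    - apply Delta0_def_Sigma, (definable_sat _ (subst3 EK two (tvar 1) (tvar 0))).
      now apply Delta0_subst3.
    - intros D env. apply sat_subst3. }
  destruct (proj2 (transfer _ (Sigma_def_ex _ _ HR) (scons a e))) as [z0 Hz0].
  { exists (pow2K (f a)). apply pow2_spec. }
  exists z0. apply (pow2_iff K EK HEK).
  exact (proj1 (transfer _ HR (scons z0 (scons a e))) Hz0).
Qed.

(* Environment layout: [c, x, b, a], then the parameters [e]. *)
Definition large_witness_set (D : structure) (env : nat -> D) : Prop :=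
  exists s t, sle D (env 0) s /\ slt s (env 2) /\ witnessed EK m D t s (env 3) /\
    listed_satisfy EK m q' D t (env 3) (env 1) (fun i => env (4 + i)).

Lemma Sigma_def_large_witness_set : Definable (Sigma (S n)) large_witness_set.
Proof.
  assert (HE0 := exp_Delta0 HEK).
  eapply definable_ext.
  - apply Sigma_def_ex, Sigma_def_ex.
    apply definable_and; [apply Sigma_closed_and | |].
    { apply Delta0_def_Sigma.
      apply definable_or; [apply Delta0_closed, D0Or | apply (Delta0_def_lt (tvar 2) (tvar 1)) |
                           apply (Delta0_def_eq (tvar 2) (tvar 1))]. }
    apply definable_and; [apply Sigma_closed_and | |].
    { apply Delta0_def_Sigma, (Delta0_def_lt (tvar 1) (tvar 4)). }
    apply definable_and; [apply Sigma_closed_and | |].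
    + apply Delta0_def_Sigma, (Delta0_def_witnessed _ HE0 m 0 1 5).
    + apply Pi_def_Sigma_succ, (Pi_def_listed_satisfy _ HE0 n m q' Hq' 0 5 3 6).
  - intros D env. reflexivity.
Qed.

Lemma maximal_witness_set (k : K) : exists s t,
  witnessed EK m K t s (f a) /\ listed_satisfy EK m q' K t (f a) k (fenv e) /\
  forall y, slt y (f a) -> ~ bitK s y -> sat K (scons y (scons k (fenv e))) q.
Proof.
  destruct pow2_standard as [z0 Hz0].
  assert (Hno_bit_0 : forall y, ~ has_bit EK K szero y).
  { intros y Hb. apply (has_bit_iff K HK EK HEK) in Hb. exact (not_bit_0 K HK EK HEK y Hb). }
  destruct (M_ISigma_jump large_witness_set (scons k (scons (f z0) (scons (f a) (fenv e)))) z0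
              Sigma_def_large_witness_set) as (c & (s & t & Hcs & Hs & Hwit & Hsat) & Hnext).
  - exists szero, szero. cbn. repeat split.
    + now right.
    + rewrite Hz0. apply pow2_pos, HK.
    + intros y _ Hb. now apply Hno_bit_0 in Hb.
    + intros y _ l _ _ Hb. now apply Hno_bit_0 in Hb.
  - intros (s & t & Hcs & Hs & _). cbn in *. apply (lt_irrefl K HK s).
    now apply (lt_le_trans K HK _ (f z0)).
  - cbn in Hs. rewrite Hz0 in Hs. exists s, t. repeat split; [exact Hwit | exact Hsat |].
    intros y Hy Hny. apply NNPP. intros Hnq. rewrite Hq_iff in Hnq.
    apply not_all_ex_not in Hnq as [l Hl]. apply imply_to_and in Hl as [Hl Hq'l].
    apply NNPP in Hq'l.
    destruct (witnesses_extend K HK EK HEK m q' s t (f a) k y (fenv e) l)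
      as (t' & Hs' & Hwit' & Hsat'); try assumption.
    apply Hnext. exists (splus s (pow2K y)), t'. cbn. repeat split; try assumption.
    + apply lt_le_succ; [exact HK|]. apply (le_lt_trans K HK _ s); [exact Hcs|].
      apply lt_add_pos_r, pow2_pos; exact HK.
    + now rewrite Hz0.
Qed.

Lemma WR_premise_fails (k : K) : ~ in_image f k ->
  ~ forall x, exists y, slt y a /\ sat M (scons y (scons x e)) (fAnd p q).
Proof.
  intros Hk Hcover. assert (HE0 := exp_Delta0 HEK).
  set (P := fun (D : structure) (env : nat -> D) => exists x s t,
    p_fails_outside EK p D s (env 0) x (fun i => env (1 + i)) /\
    witnessed EK m D t s (env 0) /\ listed_satisfy EK m q' D t (env 0) x (fun i => env (1 + i))).
  assert (HP : Definable (Sigma (S (S n))) P).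
  { eapply definable_ext.
    - apply Sigma_def_ex, Sigma_def_ex, Sigma_def_ex.
      apply definable_and; [apply Sigma_closed_and | |].
      { apply Pi_def_Sigma_succ.
        apply (Pi_def_p_fails_outside _ HE0 n p Hp 1 3 2 4). }
      apply definable_and; [apply Sigma_closed_and | |].
      + apply Delta0_def_Sigma, (Delta0_def_witnessed _ HE0 m 0 1 3).
      + apply Sigma_def_succ, Pi_def_Sigma_succ.
        apply (Pi_def_listed_satisfy _ HE0 n m q' Hq' 0 3 2 4).
    - intros D env. reflexivity. }
  destruct (maximal_witness_set k) as (s & t & Hwit & Hsat & Hmax).
  destruct (proj2 (transfer P HP (scons a e))) as (x & s0 & t0 & Hfails & Hwit0 & Hsat0).
  { exists k, s, t. repeat split; [|exact Hwit | exact Hsat].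
    intros y Hy Hnb Hpy. destruct (below_standard y a Hy) as [y0 [<- Hy0]].
    apply (p_and_q_fail_nonstandard k Hk y0 Hy0). split; [exact Hpy|].
    apply Hmax; [exact Hy|]. now rewrite <- (has_bit_iff K HK EK HEK). }
  destruct (Hcover x) as (y & Hy & Hpy & Hqy).
  assert (Hb : has_bit EK M s0 y) by (apply NNPP; intros Hnb; exact (Hfails y Hy Hnb Hpy)).
  destruct (Hwit0 y Hy Hb) as (l & Hl & Hf & Hbl).
  exact (proj1 (Hq_iff M _) Hqy l Hl (Hsat0 y Hy l Hl Hf Hbl)).
Qed.

End Counterexample.

Lemma WR_Sigma_Pi p q : Sigma (S n) p -> Pi (S n) q -> WR_holds M (fAnd p q).
Proof.
  intros Hp Hq e a Hcover. apply NNPP. intros Hfail.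
  assert (Hbounded : forall y, slt y a ->
    exists b, forall x, slt b x -> ~ sat M (scons y (scons x e)) (fAnd p q)).
  { intros y Hy. apply NNPP. intros H. apply Hfail. exists y. split; [exact Hy|].
    intros b. apply NNPP. intros H'. apply H. exists b. intros x Hx Hpq. apply H'. now exists x. }
  destruct (exp_axiom_graph K HexpK) as [EK HEK].
  destruct (Pi_prenex_neg n q Hq) as (m & q' & Hq' & Hq_iff).
  destruct Hproper as [k Hk].
  exact (WR_premise_fails p q e a Hp Hq Hbounded EK HEK m q' Hq' Hq_iff k Hk Hcover).
Qed.

End Main.

Theorem proposition5p8 (n : nat) (M : structure) (HM : model_IDelta0_exp M) :
  (exists (K : structure) (f : embedding M K),
      model_IDelta0_exp K /\ end_extension f /\ proper_extension f /\
      Sigma_elementary (n + 2) f /\ M_ISigma (n + 1) f) ->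
  WR_SigmaPi (n + 1) M.
Proof.
  intros (K & f & [HK HexpK] & Hend & Hproper & Helem & HMI). split; [apply HM|].
  replace (n + 2) with (S (S n)) in Helem by lia. replace (n + 1) with (S n) in * by lia.
  intros p q Hp Hq. now apply (WR_Sigma_Pi M K f n HK Hend Helem HMI HexpK Hproper).
Qed.
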